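(* Let $C=(C_1,\dots,C_m)$ be a quantum circuit with canonical form $G$, whose vertices are $G_1,\dots,G_m$ with $G_k$ corresponding to gate $C_k$. For any indices $1\le i<j\le m$, the following are equivalent: (1) $[i,j]_C=0$; (2) $G_j$ is not a successor of $G_i$ in $G$, i.e., there is no directed path from $G_i$ to $G_j$ in $G$.
   Context: A gate is a unitary operation acting on a specified ordered list of qubits; we identify it with the unitary it induces on the full $n$-qubit space. Two gates $A,B$ commute if their unitaries satisfy $[A,B]=AB-BA=0$. A circuit is a finite sequence of gates $(C_1,\dots,C_m)$ (applied left to right). A pairwise commutation move replaces two adjacent gates whose unitaries commute by the same two gates in swapped order. For indices $i,j$, we write $[i,j]_C=0$ if and only if $i=j$, or there is a finite sequence of pairwise commutation moves applied to $C$ after which the gate originally at position $j$ comes before the gate originally at position $i$ (for $i<j$; symmetrically for $j<i$). The canonical form of $C$ is the directed graph built as follows: start with the empty graph; for $t=1,\dots,m$: mark every vertex already in the graph as ''reachable''; add vertex $G_t$; then for $s=t-1,t-2,\dots,1$ in this order, if $G_s$ is marked reachable and $[C_s,C_t]\neq 0$, add a directed edge $G_s\to G_t$ and mark every predecessor of $G_s$ (every vertex from which there is a directed path to $G_s$ in the current graph) as not reachable. *)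

From HB Require Import structures.
From mathcomp Require Import all_boot all_order all_algebra all_field.
Set Implicit Arguments. Unset Strict Implicit. Unset Printing Implicit Defensive.
Import GRing.Theory Num.Theory.
Local Open Scope ring_scope.

(* An n-qubit gate is identified with its unitary on the full 2^n-dim space. *)
Definition gate_mx (n : nat) := 'M[algC]_(2 ^ n).

Definition unitary_mx n (A : gate_mx n) : Prop :=
  A *m (map_mx Num.conj A)^T = 1%:M.

(* A circuit (C_1,...,C_m) is a sequence; positions are 0-based: C_k = nth. *)
Definition gate_at n (C : seq (gate_mx n)) (k : nat) : gate_mx n := nth 0 C k.

Definition commute_mx n (A B : gate_mx n) : Prop := A *m B - B *m A = 0.
Definition commuteb n (A B : gate_mx n) : bool := A *m B - B *m A == 0.

(* The state is the current order of gates, recorded by their ORIGINAL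
   positions; initially iota 0 m. *)
Definition comm_move n (C : seq (gate_mx n)) (s s' : seq nat) : Prop :=
  exists k, (k.+1 < size s)%N /\
    commute_mx (gate_at C (nth 0%N s k)) (gate_at C (nth 0%N s k.+1)) /\
    s' = take k s ++ [:: nth 0%N s k.+1; nth 0%N s k] ++ drop k.+2 s.

Inductive comm_moves n (C : seq (gate_mx n)) : seq nat -> seq nat -> Prop :=
| cm_refl s : comm_moves C s s
| cm_step s1 s2 s3 : comm_move C s1 s2 -> comm_moves C s2 s3 -> comm_moves C s1 s3.

(* [i,j]_C = 0  (for i < j: gate j can be moved before gate i) *)
Definition comm_zero n (C : seq (gate_mx n)) (i j : nat) : Prop :=
  i = j \/
  exists s, comm_moves C (iota 0 (size C)) s /\
    (if (i < j)%N then (index j s < index i s)%N else (index i s < index j s)%N).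

Definition edge_rel (E : seq (nat * nat)) : rel nat := fun u v => (u, v) \in E.

Fixpoint reach_within (E : seq (nat * nat)) (k : nat) (u v : nat) : bool :=
  match k with
  | 0 => false
  | k'.+1 => ((u, v) \in E) || has (fun e => (e.1 == u) && reach_within E k' e.2 v) E
  end.

(* u is a predecessor of v: there is a directed path (of positive length)
   from u to v; any such path can be shortened to one of length <= size E. *)
Definition is_pred (E : seq (nat * nat)) (u v : nat) : bool :=
  reach_within E (size E) u v.

Fixpoint canon_inner n (C : seq (gate_mx n)) (t k : nat) (reach : nat -> bool)
    (E : seq (nat * nat)) : seq (nat * nat) :=
  match k with
  | 0 => E
  | k'.+1 =>
      if reach k' && ~~ commuteb (gate_at C k') (gate_at C t) then
        let E' := (k', t) :: E in
        canon_inner C t k' (fun u => reach u && ~~ is_pred E' u k') E'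
      else canon_inner C t k' reach E
  end.

Fixpoint canon_build n (C : seq (gate_mx n)) (k : nat) : seq (nat * nat) :=
  match k with
  | 0 => [::]
  | t.+1 => canon_inner C t t (fun u => (u < t)%N) (canon_build C t)
  end.

(* edge list of the canonical form G of C; vertex k is G_{k+1} *)
Definition canonical_form n (C : seq (gate_mx n)) : seq (nat * nat) :=
  canon_build C (size C).

Definition has_dpath (E : seq (nat * nat)) (u v : nat) : Prop :=
  exists p : seq nat, p != [::] /\ path (edge_rel E) u p /\ last u p = v.

From HB Require Import structures.
From mathcomp Require Import all_boot all_order all_algebra all_field.
From mathcomp Require Import zify.
From Stdlib Require Import Relation_Definitions Relation_Operators ClassicalEpsilon.
Set Implicit Arguments. Unset Strict Implicit. Unset Printing Implicit Defensive.
Import GRing.Theory.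

(* Both conditions say that there is no chain i = k_0 < k_1 < ... < k_r = j
   in which consecutive gates do not commute.  A commutation move exchanges
   only adjacent commuting gates, so it never reverses a non-commuting pair,
   and along such a chain j stays behind i.  Without a chain, j together with
   all the gates it depends on can be moved, in order, in front of the other
   gates, which puts j before i.  On the graph side, every edge of the
   canonical form joins non-commuting gates, and conversely a non-commuting
   pair s < t is joined by a path: either s gets an edge to t, or s was
   unmarked when an edge k -> t was added, so that s is a predecessor of k. *)

Definition swap_next (k i : nat) : nat :=
  if i == k then k.+1 else if i == k.+1 then k else i.

Lemma swap_next_lt k a b : (a < b)%N -> (a, b) != (k, k.+1) ->
  (swap_next k a < swap_next k b)%N.
Proof. by rewrite /swap_next xpair_eqE; do 4?case: eqP => ? /=; lia. Qed.

Lemma index_swap (T : eqType) (p q : seq T) x y z :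
  x \notin p -> y \notin p -> x != y ->
  index z (p ++ y :: x :: q) = swap_next (size p) (index z (p ++ x :: y :: q)).
Proof.
move=> xp yp xy; rewrite /swap_next !index_cat; case: ifP => zp.
  by have := index_mem z p; rewrite zp => lt; rewrite !ifN_eq //; lia.
rewrite /=; have [<-|zx] := eqVneq x z.
  by rewrite eq_sym (negPf xy) addn0 eqxx addn1.
have [_|zy] := eqVneq y z.
  by rewrite !addnS !addn0 eqxx (gtn_eqF (ltnSn _)).
by rewrite !ifN_eq; lia.
Qed.

Lemma index_iota0 m a : (a < m)%N -> index a (iota 0 m) = a.
Proof.
by move=> am; rewrite -{1}[a]add0n -(nth_iota 0 0 am) index_uniq ?size_iota ?iota_uniq.
Qed.

Section DirectedPaths.
Variable E : seq (nat * nat).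

Lemma dpath_edge u v : (u, v) \in E -> has_dpath E u v.
Proof. by move=> e; exists [:: v]; rewrite /= /edge_rel e. Qed.

Lemma dpath_trans u v w : has_dpath E u v -> has_dpath E v w -> has_dpath E u w.
Proof.
move=> [p [pn [pp pl]]] [p' [_ [pp' pl']]]; exists (p ++ p'); split.
  by case: p pn {pp pl}.
by rewrite cat_path last_cat pl pp pp'.
Qed.

Lemma sub_dpath (E' : seq (nat * nat)) u v : {subset E <= E'} ->
  has_dpath E u v -> has_dpath E' u v.
Proof.
move=> sEE' [p [pn [pp pl]]]; exists p; split=> //; split=> //.
by apply: sub_path pp => a b; apply: sEE'.
Qed.

Lemma reach_within_dpath k u v : reach_within E k u v -> has_dpath E u v.
Proof.
elim: k u => // k IH u /= /orP[/dpath_edge //|/hasP[[a b] eE /andP[/eqP /= au]]].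
by subst a => /IH; apply: dpath_trans; apply: dpath_edge.
Qed.

Lemma dpath_clos_trans (R : relation nat) u v :
  (forall a b, (a, b) \in E -> R a b) -> has_dpath E u v -> clos_trans nat R u v.
Proof.
move=> ER [p [+ [+ <-]]]; elim: p u => // w p IH u _ /= /andP[e pp].
case: p IH pp => [|w' p] IH pp; first exact/t_step/ER.
exact: t_trans (t_step _ _ _ _ (ER _ _ e)) (IH w isT pp).
Qed.

End DirectedPaths.

Section Circuit.
Variables (n : nat) (C : seq (gate_mx n)).

Definition depends (a b : nat) : Prop :=
  (a < b)%N /\ ~~ commuteb (gate_at C a) (gate_at C b).

(* Positions past the end hold the zero matrix, which commutes with every gate. *)
Lemma depends_lt_size a b : depends a b -> (b < size C)%N.
Proof.
case=> _; apply: contraR; rewrite -leqNgt => Cb.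
by rewrite /commuteb /gate_at [nth 0%R C b]nth_default // mulmx0 mul0mx subrr.
Qed.

Lemma comm_moves_trans s1 s2 s3 :
  comm_moves C s1 s2 -> comm_moves C s2 s3 -> comm_moves C s1 s3.
Proof. by elim=> // a b c m _ IH /IH; apply: cm_step. Qed.

Lemma comm_moveP s s' : comm_move C s s' ->
  exists p x y q, [/\ s = p ++ x :: y :: q, s' = p ++ y :: x :: q
                    & commute_mx (gate_at C x) (gate_at C y)].
Proof.
case=> k [ks [xy ->]].
exists (take k s), (nth 0 s k), (nth 0 s k.+1), (drop k.+2 s); split=> //.
by rewrite -[LHS](cat_take_drop k s) (drop_nth 0 (ltnW ks)) (drop_nth 0 ks).
Qed.

Lemma comm_move_swap p x y q : commute_mx (gate_at C x) (gate_at C y) ->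
  comm_move C (p ++ x :: y :: q) (p ++ y :: x :: q).
Proof.
move=> xy; exists (size p).
rewrite size_cat /= !nth_cat ltnn subnn.
rewrite [((size p).+1 < size p)%N]ltnNge leqnSn /= subSnn.
rewrite take_size_cat // -addn2 drop_cat ltnNge leq_addr addKn /= drop0.
by split=> //; lia.
Qed.

Definition respects_depends (s : seq nat) : Prop :=
  forall a b, depends a b -> (index a s < index b s)%N.

Lemma respects_clos_trans s a b : respects_depends s ->
  clos_trans nat depends a b -> (index a s < index b s)%N.
Proof. by move=> rs; elim=> [x y /rs|x y z _ xy _ /(ltn_trans xy)]. Qed.

Lemma respects_depends_swap p x y q :
  uniq (p ++ x :: y :: q) -> commute_mx (gate_at C x) (gate_at C y) ->
  respects_depends (p ++ x :: y :: q) -> respects_depends (p ++ y :: x :: q).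
Proof.
set s := p ++ _; move=> us xy rs a b ab.
move: (us); rewrite cat_uniq /= !negb_or.
move=> /and3P[_ /and3P[xp yp _] /andP[/andP[xny _] _]].
rewrite !(index_swap q _ xp yp xny); apply: swap_next_lt (rs a b ab) _.
have index_at z k : (k < size s)%N -> index z s = k -> z = nth 0 s k.
  by move=> ks zk; rewrite -zk nth_index // -index_mem zk.
apply/negP; rewrite xpair_eqE => /andP[/eqP ia /eqP ib].
have ps : ((size p).+1 < size s)%N by rewrite size_cat /=; lia.
have ax : a = x by rewrite (index_at a _ (ltnW ps) ia) nth_cat ltnn subnn.
have bY : b = y.
  by rewrite (index_at b _ ps ib) nth_cat [X in if X then _ else _]ltnNge leqnSn subSnn.
by move: ab => [_]; rewrite ax bY => /negP; apply; apply/eqP.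
Qed.

Lemma comm_moves_respects s s' : comm_moves C s s' ->
  uniq s -> respects_depends s -> respects_depends s'.
Proof.
elim=> // s1 s2 s3 /comm_moveP[p [x [y [q [-> -> xy]]]]] _ IH us rs.
apply: IH; last exact: respects_depends_swap.
have swap_perm : perm_eq (p ++ x :: y :: q) (p ++ y :: x :: q).
  by rewrite perm_cat2l; apply/permPl/(perm_catCA [:: x] [:: y] q).
by rewrite -(perm_uniq swap_perm).
Qed.

Lemma comm_zero_no_dependency i j : (i < j)%N ->
  comm_zero C i j -> ~ clos_trans nat depends i j.
Proof.
move=> ij [ieqj|[s [ms]]]; first by rewrite ieqj ltnn in ij.
rewrite ij => ji ij_dep.
have rs : respects_depends s.
  apply: comm_moves_respects ms (iota_uniq _ _) _ => a b ab.
  have bC := depends_lt_size ab; have [a_lt_b _] := ab.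
  by rewrite !index_iota0 // (ltn_trans a_lt_b).
by have := respects_clos_trans rs ij_dep; lia.
Qed.

Lemma comm_moves_left p r y q :
  (forall x, x \in r -> commute_mx (gate_at C x) (gate_at C y)) ->
  comm_moves C (p ++ r ++ y :: q) (p ++ y :: r ++ q).
Proof.
elim: r p => [|x r IH] p ry /=; first exact: cm_refl.
have := IH (rcons p x) (fun z zr => ry z (mem_behead (zr : z \in behead (x :: r)))).
rewrite -cats1 -!catA /= => moved; apply: comm_moves_trans moved _.
by apply: cm_step (cm_refl _ _); apply/comm_move_swap/ry; rewrite inE eqxx.
Qed.

Lemma comm_moves_partition (U : pred nat) :
  (forall x y, ~~ U x -> U y -> (x < y)%N -> commute_mx (gate_at C x) (gate_at C y)) ->
  forall q p r, sorted ltn q -> all (predC U) r ->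
  (forall x y, x \in r -> y \in q -> (x < y)%N) ->
  comm_moves C (p ++ r ++ q) (p ++ filter U q ++ r ++ filter (predC U) q).
Proof.
move=> U_comm; elim=> [|y q IH] p r sq rU rq /=; first by rewrite cats0; apply: cm_refl.
have sq' := path_sorted sq.
have yq : {in q, forall z, y < z}%N by apply/allP; apply: order_path_min ltn_trans sq.
have rq' x z : x \in r -> z \in q -> (x < z)%N.
  by move=> xr zq; apply: rq xr (mem_behead (zq : z \in behead (y :: q))).
case: ifP => Uy.
  apply: comm_moves_trans (comm_moves_left p q _) _.
    by move=> x xr; apply: U_comm (allP rU x xr) Uy (rq _ _ xr (mem_head _ _)).
  by have := IH (rcons p y) r sq' rU rq'; rewrite -cats1 -!catA.
have := IH p (rcons r y) sq'; rewrite -cats1 -!catA /=; apply.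
  by rewrite all_cat rU /= Uy.
by move=> x z; rewrite mem_cat inE => /orP[xr zq|/eqP -> zq]; [apply: rq' | apply: yq].
Qed.

Lemma no_dependency_comm_zero i j : (i < j)%N -> (j < size C)%N ->
  ~ clos_trans nat depends i j -> comm_zero C i j.
Proof.
move=> ij jC ij_indep; right.
pose U z := if excluded_middle_informative (z = j \/ clos_trans nat depends z j)
            then true else false.
have UP z : U z <-> (z = j \/ clos_trans nat depends z j).
  by rewrite /U; case: excluded_middle_informative => h; split.
have U_comm x y : ~~ U x -> U y -> (x < y)%N -> commute_mx (gate_at C x) (gate_at C y).
  move=> /negP Ux /UP Uy xy; apply/eqP/negPn/negP => nc; apply/Ux/UP; right.
  by case: Uy => [<-|]; [apply: t_step | apply: t_trans; apply: t_step].
pose m := iota 0 (size C).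
exists (filter U m ++ filter (predC U) m); split.
  by apply: (@comm_moves_partition U U_comm m [::] [::] (iota_ltn_sorted 0 _)).
have jU : j \in filter U m.
  by rewrite mem_filter mem_iota add0n jC !andbT; apply/UP; left.
have iU : i \notin filter U m.
  by rewrite mem_filter; apply/nandP; left; apply/negP => /UP[ieqj|//]; lia.
by rewrite ij !index_cat jU (negPf iU); move: jU; rewrite -index_mem; lia.
Qed.

Lemma comm_zeroE i j : (i < j)%N -> (j < size C)%N ->
  comm_zero C i j <-> ~ clos_trans nat depends i j.
Proof.
move=> ij jC.
by split; [apply: comm_zero_no_dependency | apply: no_dependency_comm_zero].
Qed.

Definition edges_depend (E : seq (nat * nat)) : Prop :=
  forall u v, (u, v) \in E -> depends u v.

Lemma canon_inner_depends t k reach E : (k <= t)%N ->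
  edges_depend E -> edges_depend (canon_inner C t k reach E).
Proof.
elim: k reach E => [|k IH] reach E kt dE //=.
case: ifP => [/andP[_ nc]|_]; apply: IH; rewrite ?(ltnW kt) //.
by move=> u v; rewrite inE => /orP[/eqP[-> ->]|/dE].
Qed.

Lemma canonical_form_depends : edges_depend (canonical_form C).
Proof.
rewrite /canonical_form; elim: (size C) => [//|t IH] /=.
exact: canon_inner_depends.
Qed.

Lemma canon_inner_sub t k reach E : {subset E <= canon_inner C t k reach E}.
Proof.
elim: k reach E => [|k IH] reach E //=.
by case: ifP => _ e eE; apply: IH; rewrite // inE eE orbT.
Qed.

Lemma canon_build_sub t t' : (t <= t')%N ->
  {subset canon_build C t <= canon_build C t'}.
Proof.
elim: t' => [|t' IH]; first by rewrite leqn0 => /eqP ->.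
rewrite leq_eqVlt => /orP[/eqP -> //|/IH sub e /sub].
exact: canon_inner_sub.
Qed.

(* The invariant of the inner loop: a vertex below k that is no longer marked
   reachable already has a path to t.  Adding the edge k -> t unmarks exactly
   the predecessors of k, which then reach t through k. *)
Lemma canon_inner_dpath t k reach E : (k <= t)%N ->
  (forall u, (u < k)%N -> ~~ reach u -> has_dpath E u t) ->
  forall s, (s < k)%N -> ~~ commuteb (gate_at C s) (gate_at C t) ->
  has_dpath (canon_inner C t k reach E) s t.
Proof.
elim: k reach E => // k IH reach E kt inv s sk nc /=.
have into_result r E' u : has_dpath E' u t -> has_dpath (canon_inner C t k r E') u t.
  exact/sub_dpath/canon_inner_sub.
move: sk; rewrite ltnS leq_eqVlt => /orP[/eqP sk|sk].
  subst s; case: ifP => [_|/negbT].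
    by apply/into_result/dpath_edge; rewrite inE eqxx.
  by rewrite nc andbT => /(inv k (ltnSn k)); apply: into_result.
case: ifP => _; apply: IH (ltnW kt) _ s sk nc => u uk; last exact/inv/ltnW.
rewrite negb_and negbK => /orP[/(inv u (ltnW uk))|/reach_within_dpath].
  by apply: sub_dpath => e eE; rewrite inE eE orbT.
by move/dpath_trans; apply; apply: dpath_edge; rewrite inE eqxx.
Qed.

Lemma depends_dpath a b : depends a b -> has_dpath (canonical_form C) a b.
Proof.
move=> ab; have bC := depends_lt_size ab; case: ab => a_lt_b nc.
apply: (sub_dpath (canon_build_sub bC)); rewrite /=.
by apply: canon_inner_dpath => // u ->.
Qed.

Lemma canonical_form_dpathE a b :
  has_dpath (canonical_form C) a b <-> clos_trans nat depends a b.
Proof.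
split; first exact/dpath_clos_trans/canonical_form_depends.
by elim=> [x y /depends_dpath //|x y z _ + _]; apply: dpath_trans.
Qed.

End Circuit.

Theorem mainTheorem2 (n : nat) (C : seq (gate_mx n)) :
  (forall A, A \in C -> unitary_mx A) ->
  forall i j : nat, (i < j)%N -> (j < size C)%N ->
  comm_zero C i j <-> ~ has_dpath (canonical_form C) i j.
Proof.
by move=> _ i j ij jC; rewrite comm_zeroE // canonical_form_dpathE.
Qed.
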